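(* Let $M$ be a strong $r$-helix hypersurface in $E^n$ with unit normal vector field $N$ and space of helix directions $H(M)\subset\mathbb{R}^n$. Let $\alpha: I\subset\mathbb{R}\to M$ be a curve on $M$, and suppose there exists $d_j\in H(M)$ such that $d_j\notin T_pM$ for every $p=\alpha(t)$, $t\in I$. Let $\eta: M\to S^{n-1}$, $\eta(P)=N(P)$, be the Gauss transformation of $M$. Then the curve $\beta(t)=\eta(\alpha(t))=N|_{\alpha(t)}$ is not a geodesic curve on the unit hypersphere $S^{n-1}\subset E^n$.
   Context: $\langle\cdot,\cdot\rangle$ is the standard inner product on $E^n=\mathbb{R}^n$. For a hypersurface $M\subset\mathbb{R}^n$ with unit normal $N$, a vector $d$ is a helix direction of $M$ if the angle between $d$ and $T_pM$ is the same for all $p\in M$, equivalently $\langle N,d\rangle$ is constant on $M$. $H(M)$ is the set of helix directions; $M$ is a strong $r$-helix if $H(M)$ is an $r$-dimensional linear subspace of $\mathbb{R}^n$. A curve on $S^{n-1}$ is a geodesic of $S^{n-1}$ if its second derivative is normal to $S^{n-1}$ at each point. *)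

From HB Require Import structures.
From mathcomp Require Import all_boot all_order all_algebra.
From mathcomp Require Import all_classical all_reals all_analysis.
Set Implicit Arguments. Unset Strict Implicit. Unset Printing Implicit Defensive.
Import Order.TTheory GRing.Theory Num.Theory.
Import numFieldNormedType.Exports.
Local Open Scope classical_set_scope.
Local Open Scope ring_scope.

Section Defs.
Variables (R : realType) (n : nat).
Local Notation V := 'rV[R]_n.

Definition dotp (u v : V) : R := \sum_(i < n) u ord0 i * v ord0 i.

Definition tangent_space (M : set V) (p : V) : set V :=
  [set v | exists g : R -> V,
     g 0 = p /\ (\forall t \near (0 : R), M (g t)) /\ is_derive (0 : R) 1 g v].

(* M is a hypersurface: each tangent space T_pM (p in M) is an
   (n-1)-dimensional linear subspace of R^n, given as the row space of a
   row-free (n-1) x n matrix. *)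
Definition is_hypersurface (M : set V) : Prop :=
  forall p, M p -> exists B : 'M[R]_(n.-1, n),
    row_free B /\ forall v : V, tangent_space M p v <-> (v <= B)%MS.

Definition unit_normal_field (M : set V) (N : V -> V) : Prop :=
  {within M, continuous N} /\
  forall p, M p -> dotp (N p) (N p) = 1 /\
    forall v, tangent_space M p v -> dotp (N p) v = 0.

Definition helix_direction (M : set V) (N : V -> V) (d : V) : Prop :=
  exists c : R, forall p, M p -> dotp (N p) d = c.

Definition strong_helix (M : set V) (N : V -> V) (r : nat) : Prop :=
  exists B : 'M[R]_(r, n),
    row_free B /\ forall d : V, helix_direction M N d <-> (d <= B)%MS.

(* beta is a geodesic of the unit hypersphere S^{n-1} on the set I:
   beta lies on S^{n-1}, is twice differentiable, and its second derivative
   is normal to S^{n-1} (i.e. parallel to the position vector). *)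
Definition sphere_geodesic_on (I : set R) (beta : R -> V) : Prop :=
  forall t, I t ->
    dotp (beta t) (beta t) = 1 /\
    derivable beta t 1 /\ derivable (derive1 beta) t 1 /\
    exists lam : R, derive1 (derive1 beta) t = lam *: beta t.
End Defs.

From HB Require Import structures.
From mathcomp Require Import all_boot all_order all_algebra.
From mathcomp Require Import all_classical all_reals all_analysis.
From mathcomp Require Import lra.
Set Implicit Arguments. Unset Strict Implicit. Unset Printing Implicit Defensive.
Import Order.TTheory GRing.Theory Num.Theory.
Import numFieldNormedType.Exports.
Local Open Scope classical_set_scope.
Local Open Scope ring_scope.

(* Suppose beta = N o alpha were a geodesic of the sphere, beta'' = lam beta.
   Since d is a helix direction, <beta, d> = c is constant, and c <> 0 because
   a vector orthogonal to N(p) is tangent to the hypersurface at p.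
   Differentiating twice gives <beta'', d> = lam c = 0, so lam = 0 and
   beta'' = 0.  Differentiating <beta, beta> = 1 twice gives
   <beta', beta'> + <beta, beta''> = 0, hence beta' = 0 and beta is constant,
   contradicting that N takes two different values along alpha. *)

Section InnerProduct.
Variables (R : realType) (n : nat).
Local Notation V := 'rV[R]_n.

Lemma dotpC (u v : V) : dotp u v = dotp v u.
Proof. by apply: eq_bigr => i _; rewrite mulrC. Qed.

Lemma dotp0r (u : V) : dotp u 0 = 0.
Proof. by rewrite /dotp big1 // => i _; rewrite mxE mulr0. Qed.

Lemma dotp0l (u : V) : dotp 0 u = 0.
Proof. by rewrite dotpC dotp0r. Qed.

Lemma dotpBl (u v w : V) : dotp (u - v) w = dotp u w - dotp v w.
Proof. by rewrite /dotp -sumrB; apply: eq_bigr => i _; rewrite !mxE mulrBl. Qed.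

Lemma dotpZl k (u w : V) : dotp (k *: u) w = k * dotp u w.
Proof. by rewrite /dotp mulr_sumr; apply: eq_bigr => i _; rewrite !mxE mulrA. Qed.

Lemma dotpp_eq0 (u : V) : dotp u u = 0 -> u = 0.
Proof.
move=> /eqP; rewrite psumr_eq0 => [/allP u0|i _]; last by rewrite -expr2 sqr_ge0.
apply/matrixP => i j; rewrite (ord1 i) mxE.
by have := u0 j (mem_index_enum j); rewrite /= mulf_eq0 orbb => /eqP.
Qed.

End InnerProduct.

Section Derivatives.
Variables (R : realType) (n : nat).
Local Notation V := 'rV[R]_n.

Definition coord (i : 'I_n) (v : V) : R^o := v ord0 i.

Lemma coord_is_linear i : linear (coord i).
Proof. by move=> k u v; rewrite /coord !mxE. Qed.

HB.instance Definition _ i :=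
  GRing.isLinear.Build R V R^o *:%R (coord i) (coord_is_linear i).

Lemma is_derive_coord (f : R -> V) t i : derivable f t 1 ->
  is_derive t 1 (fun x => f x ord0 i : R^o) ('D_1 f t ord0 i).
Proof.
move=> df; have dc : differentiable (coord i) (f t).
  by apply: linear_differentiable; exact: coord_continuous.
have dfd : differentiable f t by apply/derivable1_diffP.
have dcf : differentiable (coord i \o f) t := differentiable_comp dfd dc.
have -> : (fun x => f x ord0 i : R^o) = coord i \o f by [].
apply: DeriveDef; first exact/derivable1_diffP.
rewrite deriveE // diff_comp // diff_lin //=; last exact: coord_continuous.
by rewrite -deriveE.
Qed.

Lemma is_derive_dotp (f g : R -> V) t : derivable f t 1 -> derivable g t 1 ->
  is_derive t 1 (fun x => dotp (f x) (g x) : R^o)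
    (dotp ('D_1 f t) (g t) + dotp (f t) ('D_1 g t)).
Proof.
move=> df dg.
have -> : (fun x => dotp (f x) (g x) : R^o) =
    \sum_(i < n) ((fun x => f x ord0 i : R^o) * (fun x => g x ord0 i : R^o)).
  by rewrite fct_sumE; apply/funext.
apply: is_derive_eq.
  by apply: is_derive_sum => i; apply: is_deriveM; exact: is_derive_coord.
rewrite /dotp -big_split /=; apply: eq_bigr => i _.
by rewrite /GRing.scale /= addrC [X in _ + X]mulrC.
Qed.

Lemma is_derive_dotp_cst (f : R -> V) (d : V) t : derivable f t 1 ->
  is_derive t 1 (fun x => dotp (f x) d : R^o) (dotp ('D_1 f t) d).
Proof.
move=> df; apply: is_derive_eq (is_derive_dotp df (derivable_cst d t 1)) _.
by rewrite derive_cst dotp0r addr0.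
Qed.

Lemma is_derive_cst_on_open_eq0 (I : set R) (h : R -> R^o) (c dh : R) t :
  open I -> I t -> (forall x, I x -> h x = c) -> is_derive t 1 h dh -> dh = 0.
Proof.
move=> oI It hc dh1.
have : is_derive t 1 (cst c : R -> R^o) dh.
  apply: near_eq_is_derive dh1; apply: filterS (oI t It); exact: hc.
by move=> /(@derive_val _ _ _ _ _ _ _) <-; rewrite derive_cst.
Qed.

Lemma derive1_eq0_itv_cst (f : R -> V) (a b s t : R) :
  (forall x, x \in `]a, b[ -> derivable f x 1) ->
  (forall x, x \in `]a, b[ -> derive1 f x = 0) ->
  s \in `]a, b[ -> t \in `]a, b[ -> f s = f t.
Proof.
move=> df f'0; wlog st : s t / s <= t => [hwlog sI tI|sI tI].
  by case: (leP s t) => [/hwlog|/ltW /hwlog]; [apply|move=> /(_ tI sI)].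
move: st; rewrite le_eqVlt => /orP[/eqP -> //|st].
have sub x : x \in `[s, t] -> x \in `]a, b[.
  move: sI tI; rewrite !in_itv /= => /andP[as_ _] /andP[_ tb] /andP[sx xt].
  by rewrite (lt_le_trans as_ sx) (le_lt_trans xt tb).
set w := f t - f s.
have D x : x \in `[s, t] -> is_derive x 1 (fun y => dotp (f y) w : R^o) 0.
  move=> /sub xI; apply: is_derive_eq (is_derive_dotp_cst w (df x xI)) _.
  by rewrite -derive1E f'0 // dotp0l.
have cont : {within `[s, t], continuous (fun y => dotp (f y) w : R^o)}.
  by apply: derivable_within_continuous => x /D [].
have [x _] := MVT (df := fun _ => 0) st (fun x xI => D x (subset_itv_oo_cc xI)) cont.
by rewrite mul0r -dotpBl => /dotpp_eq0 /eqP; rewrite subr_eq0 => /eqP.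
Qed.

End Derivatives.

Lemma tangent_space_of_normal_orth (R : realType) (n : nat) (M : set 'rV[R]_n)
    (N : 'rV[R]_n -> 'rV[R]_n) p d :
  is_hypersurface M -> unit_normal_field M N -> M p ->
  dotp (N p) d = 0 -> tangent_space M p d.
Proof.
move=> hM [_ hN] Mp hd.
have [B [rfB HB]] := hM p Mp.
have [u1 uorth] := hN p Mp.
set u := N p in u1 uorth hd.
have u0 : u != 0 by apply: contra_eq_neq u1 => ->; rewrite dotp0l eq_sym oner_eq0.
have sBK : (B <= kermx u^T)%MS.
  apply/sub_kermxP/matrixP => i j; rewrite !mxE.
  rewrite -[RHS](uorth (row i B) (proj2 (HB _) (row_sub i B))).
  by apply: eq_bigr => k _; rewrite !mxE (ord1 j) mulrC.
(* both spaces have dimension n - 1, so inclusion forces equality *)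
have /andP[_ sKB] : (B == kermx u^T)%MS.
  rewrite -(mxrank_leqif_eq sBK).2 mxrank_ker mxrank_tr rank_rV u0 subn1.
  by move/eqP: rfB => ->.
apply/HB; apply: submx_trans sKB.
apply/sub_kermxP/matrixP => i j; rewrite !mxE -[RHS]hd.
by apply: eq_bigr => k _; rewrite !mxE (ord1 i) (ord1 j) mulrC.
Qed.

Section SphereGeodesic.
Variables (R : realType) (n : nat) (I : set R) (beta : R -> 'rV[R]_n).
Hypotheses (oI : open I) (geo : sphere_geodesic_on I beta).

Lemma sphere_geodesic_dotp_derive1 t : I t -> dotp (beta t) (derive1 beta t) = 0.
Proof.
move=> It; have [_ [db _]] := geo It.
have := is_derive_cst_on_open_eq0 oI It _ (is_derive_dotp db db).
rewrite -derive1E dotpC => /(_ 1) beta_beta'.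
suff : dotp (beta t) (derive1 beta t) + dotp (beta t) (derive1 beta t) = 0 by lra.
by apply: beta_beta' => x /geo [].
Qed.

Lemma sphere_geodesic_derive1_eq0 (d : 'rV[R]_n) (c : R) : c != 0 ->
  (forall t, I t -> dotp (beta t) d = c) -> forall t, I t -> derive1 beta t = 0.
Proof.
move=> c0 betad t It; have [_ [db [db' [lam beta''E]]]] := geo It.
have beta'd x : I x -> dotp (derive1 beta x) d = 0.
  move=> Ix; have [_ [dbx _]] := geo Ix.
  by rewrite derive1E; apply: is_derive_cst_on_open_eq0 oI Ix betad (is_derive_dotp_cst d dbx).
have lam0 : lam = 0.
  have := is_derive_cst_on_open_eq0 oI It beta'd (is_derive_dotp_cst d db').
  rewrite -derive1E beta''E dotpZl betad // => /eqP.
  by rewrite mulf_eq0 (negbTE c0) orbF => /eqP.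
apply: dotpp_eq0.
have := is_derive_cst_on_open_eq0 oI It sphere_geodesic_dotp_derive1 (is_derive_dotp db db').
by rewrite -!derive1E beta''E lam0 scale0r dotp0r addr0.
Qed.

End SphereGeodesic.

Theorem theorem3p3 (R : realType) (n r : nat) (M : set 'rV[R]_n)
    (N : 'rV[R]_n -> 'rV[R]_n) (a b : R) (alpha : R -> 'rV[R]_n)
    (dj : 'rV[R]_n) :
  is_hypersurface M ->
  unit_normal_field M N ->
  strong_helix M N r ->
  a < b ->
  (forall t, t \in `]a, b[ -> M (alpha t) /\ derivable alpha t 1) ->
  helix_direction M N dj ->
  (forall t, t \in `]a, b[ -> ~ tangent_space M (alpha t) dj) ->
  (exists s t, [/\ s \in `]a, b[, t \in `]a, b[ & N (alpha s) != N (alpha t)]) ->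
  ~ sphere_geodesic_on [set t | t \in `]a, b[] (N \o alpha).
Proof.
move=> hM hN _ _ Malpha [c hc] dj_not_tangent [s [t [sI tI Ns_neq_Nt]]] geo.
have betad x : x \in `]a, b[ -> dotp ((N \o alpha) x) dj = c.
  by move=> /Malpha[Mx _]; exact: hc.
have c0 : c != 0.
  apply/eqP => c0; apply: (dj_not_tangent s sI).
  have [Ms _] := Malpha s sI.
  by apply: (tangent_space_of_normal_orth hM hN Ms); rewrite hc.
have dbeta x : x \in `]a, b[ -> derivable (N \o alpha) x 1 by move=> /geo[_ []].
have beta'0 := sphere_geodesic_derive1_eq0 (itv_open a b) geo c0 betad.
have /= Ns_eq_Nt := derive1_eq0_itv_cst dbeta beta'0 sI tI.
by rewrite Ns_eq_Nt eqxx in Ns_neq_Nt.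
Qed.
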